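(* Let $N\ge 3$ and consider the complete graph $K_N$ as a PIR system with file length $L=2^{N-1}$, and the following scheme. Suppose the desired file is $W_{i,i'}$. Let $\Omega=\{P\subseteq[N]: |P\cap\{i,i'\}|=1\}$ (so $|\Omega|=L$), and let the user choose a bijection $\pi:\Omega\to[L]$ uniformly at random. For each server $j$ the user builds a bijection $\sigma_j$ from the family of all subsets of $N(j)=[N]\setminus\{j\}$ onto $[L]$ as follows: if $j\notin\{i,i'\}$, set $\sigma_j(P\setminus\{j\})=\pi(P)$ for every $P\in\Omega$ with $j\in P$; if $a\in\{i,i'\}$ and $\bar a$ denotes the other element of $\{i,i'\}$, set $\sigma_a(\{\bar a\}\cup(P\setminus\{a\}))=\pi(P)$ for every $P\in\Omega$ with $a\in P$; in both cases, the remaining values are assigned so that $\sigma_j$ becomes a bijection, uniformly at random among such completions. The query to server $j$ is $\sigma_j$. Server $j$ answers with the $L-1$ bits \[ b^j_P=\bigoplus_{v\in P}(W_{j,v})_{\sigma_j(P)},\qquad \emptyset\ne P\subseteq N(j), \] where $(W)_l$ is the $l$-th bit of $W$. Then this scheme is a PIR scheme (reliable and private) with rate $\frac{2^{N-1}}{2^{N-1}-1}\cdot\frac{1}{N}$.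
   Context: Graph-based PIR model on the complete graph $K_N$: servers $1,\dots,N$; for each pair of distinct servers $j,v$ there is exactly one file $W_{j,v}=W_{v,j}$, stored on servers $j$ and $v$; files are independent, each uniform on $\mathbb{F}_2^L$. A user wants one file, whose index $\theta$ is uniform and independent of the files; it sends a query to each server, and each server answers with a deterministic function of its query and the files it stores. Reliability: the desired file is determined by all answers and queries. Privacy: for each server $j$, $H(\theta\mid Q_j,W_{S_j})=H(\theta)$, where $Q_j$ is the query to server $j$ and $W_{S_j}$ the files it stores. The rate is $L$ divided by the total number of answer bits (here, the sum of the entropies $H(A_j)$). *)

From HB Require Import structures.
From mathcomp Require Import all_boot all_order all_algebra.
From mathcomp Require Import reals exp.
Set Implicit Arguments. Unset Strict Implicit. Unset Printing Implicit Defensive.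
Import Order.TTheory GRing.Theory Num.Theory.
Local Open Scope ring_scope.

Definition Lf (N : nat) : nat := (2 ^ (N - 1))%N.

(* File indices: edges of K_N = 2-element subsets {j,v} of the servers 'I_N. *)
Definition Pair (N : nat) := {e : {set 'I_N} | #|e| == 2%N}.

Definition Bits (N : nat) := {ffun 'I_(Lf N) -> bool}.
Definition Files (N : nat) := {ffun Pair N -> Bits N}.

(* A partial labelling of subsets of [N] by [L]; [None] = outside the domain.
   Used both for pi (domain Omega) and for sigma_j (domain = subsets of N(j)). *)
Definition Lab (N : nat) := {ffun {set 'I_N} -> option 'I_(Lf N)}.

(* The randomness of the whole experiment:
   (desired index theta, files W, bijection pi, family of queries sigma_j). *)
Definition Outcome (N : nat) :=
  (Pair N * Files N * Lab N * {ffun 'I_N -> Lab N})%type.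

Definition theta N (w : Outcome N) : Pair N := w.1.1.1.
Definition files N (w : Outcome N) : Files N := w.1.1.2.
Definition piOf N (w : Outcome N) : Lab N := w.1.2.
Definition sigmaOf N (w : Outcome N) : {ffun 'I_N -> Lab N} := w.2.

Definition Omega N (th : Pair N) : {set {set 'I_N}} :=
  [set P : {set 'I_N} | #|P :&: val th| == 1%N].

Definition bij_on N (D : pred {set 'I_N}) (p : Lab N) : bool :=
  [&& [forall P, (p P == None) == ~~ D P],
      [forall l : 'I_(Lf N), [exists P, p P == Some l]] &
      [forall P, forall P', (p P != None) ==> (p P == p P') ==> (P == P')]].

Definition pi_ok N (th : Pair N) (p : Lab N) : bool :=
  bij_on (fun P => P \in Omega th) p.

(* The set sigma_j is forced to take the value pi(P) on:
   P \ {j}                 if j \notin {i,i'},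
   {abar} cup (P \ {a})    if j = a \in {i,i'}  (abar the other element),
   i.e. (P \ {a}) cup ({i,i'} \ {a}). *)
Definition forced_set N (th : Pair N) (j : 'I_N) (P : {set 'I_N}) : {set 'I_N} :=
  if j \in val th then (P :\ j) :|: (val th :\ j) else P :\ j.

Definition sigma_ok N (th : Pair N) (p : Lab N) (j : 'I_N) (s : Lab N) : bool :=
  bij_on (fun S => j \notin S) s &&
  [forall P, ((P \in Omega th) && (j \in P)) ==> (s (forced_set th j P) == p P)].

(* The joint probability mass function of the experiment:
   theta uniform, files uniform and independent of theta, pi uniform among
   bijections Omega -> [L], and, given theta and pi, each sigma_j uniform
   (independently) among the bijections completing the forced values. *)
Definition mu (R : realType) N (w : Outcome N) : R :=
  let: (th, W, p, s) := w in
  (#|{: Pair N}|%:R)^-1 * (#|{: Files N}|%:R)^-1 *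
  ((pi_ok th p)%:R / #|[pred q | pi_ok th q]|%:R) *
  \prod_(j < N) ((sigma_ok th p j (s j))%:R / #|[pred t | sigma_ok th p j t]|%:R).

(* Bit l of the file W_{j,v} (W_{j,v} = W_{v,j}); only used with j <> v. *)
Definition Wbit N (W : Files N) (j v : 'I_N) (l : 'I_(Lf N)) : bool :=
  if (insub [set j; v] : option (Pair N)) is Some e then W e l else false.

Definition query N (w : Outcome N) (j : 'I_N) : Lab N := sigmaOf w j.

Definition stored N (w : Outcome N) (j : 'I_N) : {ffun Pair N -> option (Bits N)} :=
  [ffun e : Pair N => if j \in val e then Some (files w e) else None].

Definition answer N (w : Outcome N) (j : 'I_N) : {ffun {set 'I_N} -> bool} :=
  [ffun P : {set 'I_N} =>
     if sigmaOf w j P is Some l then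
       (P != set0) && \big[addb/false]_(v in P) Wbit (files w) j v l
     else false].

Definition log2 (R : realType) (x : R) : R := ln x / ln 2.

Definition pr (R : realType) N (T : finType) (X : Outcome N -> T) (x : T) : R :=
  \sum_(w : Outcome N | X w == x) mu R w.

Definition entropy (R : realType) N (T : finType) (X : Outcome N -> T) : R :=
  - \sum_(x : T) pr R X x * log2 (pr R X x).

Definition centropy (R : realType) N (T U : finType)
    (X : Outcome N -> T) (Y : Outcome N -> U) : R :=
  entropy R (fun w => (X w, Y w)) - entropy R Y.

Definition reliable (R : realType) N : Prop :=
  exists D : Pair N -> {ffun 'I_N -> Lab N} -> {ffun 'I_N -> {ffun {set 'I_N} -> bool}} -> Bits N,
    forall w : Outcome N, 0 < mu R w ->
      D (theta w) [ffun j => query w j] [ffun j => answer w j] = files w (theta w).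

Definition private (R : realType) N : Prop :=
  forall j : 'I_N,
    centropy R (@theta N) (fun w => (query w j, stored w j)) = entropy R (@theta N).

Definition rate (R : realType) N : R :=
  (Lf N)%:R / \sum_(j < N) entropy R (fun w => answer w j).

From HB Require Import structures.
From mathcomp Require Import all_boot all_order all_algebra.
From mathcomp Require Import reals exp ring.
Import Order.TTheory GRing.Theory Num.Theory.
Set Implicit Arguments. Unset Strict Implicit. Unset Printing Implicit Defensive.

(* Write theta = {a, b} and let P be the element of Omega labelled l by pi, with a in P.
   Every server j in P is asked, at position l, for the XOR of the files W_{j,v} over its
   forced set, which is P \ {j}, except that server a also includes W_{a,b}. Summing these
   answers, each W_{j,v} with j, v in P appears twice and cancels, so bit l of W_{a,b} is
   recovered.

   Relabelling positions by a permutation r of [L] preserves the joint law of pi and the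
   sigma_j, so sigma_j alone is uniform over all bijections from the subsets of N(j) onto [L],
   whatever theta is. The files are uniform and independent of theta, hence so is the view
   (Q_j, W_{S_j}) of server j.

   For a fixed sigma_j, the answer of server j is a GF(2)-linear function of the files that
   maps onto the 2^(L-1) bit vectors supported on the nonempty subsets of N(j). Uniform files
   thus give a uniform answer, and H(A_j) = L - 1. *)

Lemma in_bij_of_card (T K : finType) (k0 : K) (A : {set T}) (B : {set K}) :
  #|A| = #|B| -> exists2 f : T -> K, {in A &, injective f} & f @: A = B.
Proof.
move=> AB; pose f x := nth k0 (enum B) (index x (enum A)).
have idx_lt x : x \in A -> (index x (enum A) < size (enum B))%N.
  by move=> xA; rewrite -cardE -AB cardE index_mem mem_enum.
have finj : {in A &, injective f}.
  move=> x y xA yA /eqP; rewrite /f nth_uniq ?enum_uniq ?idx_lt // => /eqP.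
  by apply: (index_inj x); rewrite mem_enum.
exists f => //; apply/eqP; rewrite eqEcard card_in_imset // AB leqnn andbT.
by apply/subsetP => _ /imsetP [x xA ->]; rewrite -mem_enum mem_nth ?idx_lt.
Qed.

Lemma card_partial_image (T K : finType) (h : T -> option K) :
  (forall x y, h x != None -> h x = h y -> x = y) ->
  #|[set l | [exists x, h x == Some l]]| = #|[set x | h x != None]|.
Proof.
move=> hinj; rewrite -(card_imset _ (@Some_inj _)) -(card_in_imset (f := h)) => [|x y]; last first.
  by rewrite inE => hx _; apply: hinj.
apply: eq_card => o; apply/imsetP/imsetP => [[l /[!inE] /existsP [x /eqP e] ->]|[x /[!inE] hx ->]].
  by exists x; rewrite ?inE e.
by case e: (h x) hx => [l|] // _; exists l => //; rewrite inE; apply/existsP; exists x; rewrite e.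
Qed.

Lemma Lf_gt0 N : (0 < Lf N)%N.
Proof. by rewrite expn_gt0. Qed.

Section Bijections.

Variable N : nat.
Implicit Types (D : pred {set 'I_N}) (p s : Lab N).

Lemma bij_onP D p :
  reflect [/\ forall P, (p P == None) = ~~ D P,
              forall l, exists P, p P = Some l
            & forall P P', p P != None -> p P = p P' -> P = P'] (bij_on D p).
Proof.
apply: (iffP and3P) => [[/forallP h1 /forallP h2 /forallP h3]|[h1 h2 h3]]; split.
- by move=> P; exact: eqP (h1 P).
- by move=> l; have /existsP [P /eqP] := h2 l; exists P.
- move=> P P' nz e; have /forallP/(_ P')/implyP/(_ nz)/implyP := h3 P.
  by rewrite e eqxx => /(_ isT)/eqP.
- by apply/forallP => P; rewrite h1.
- by apply/forallP => l; have [P e] := h2 l; apply/existsP; exists P; rewrite e.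
- apply/forallP => P; apply/forallP => P'; apply/implyP => nz.
  by apply/implyP => /eqP/(h3 _ _ nz)->.
Qed.

Lemma bij_on_dom D p P : bij_on D p -> (p P != None) = D P.
Proof. by case/bij_onP => p1 _ _; rewrite p1 negbK. Qed.

Lemma bij_on_extend D (h : {set 'I_N} -> option 'I_(Lf N)) :
  #|D| = Lf N -> (forall S, h S != None -> D S) ->
  (forall S S', h S != None -> h S = h S' -> S = S') ->
  exists2 s, bij_on D s & forall S, h S != None -> s S = h S.
Proof.
move=> cardD hD hinj; pose l0 := Ordinal (Lf_gt0 N).
pose dom := [set S | h S != None]; pose img := [set l | [exists S, h S == Some l]].
have [f finj fA] : exists2 f, {in [set S | D S] :\: dom &, injective f} &
    f @: ([set S | D S] :\: dom) = ~: img.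
  apply: (in_bij_of_card l0).
  rewrite cardsD -(addKn #|img| #|~: img|) cardsC card_ord card_partial_image //.
  congr (_ - _); first by rewrite -cardD; apply: eq_card => S; rewrite inE.
  by apply: eq_card => S; rewrite !inE; case: (boolP (h S != None)) => [/hD->|]; rewrite ?andbF.
have inA S : h S = None -> D S -> S \in [set S | D S] :\: dom by rewrite !inE => -> ->.
pose s := [ffun S => if h S is Some l then Some l else if D S then Some (f S) else None].
have s_img S l : s S = Some l -> (l \in img) = (h S != None).
  rewrite ffunE; case e: (h S) => [a|] /=.
    by move=> [<-]; rewrite inE; apply/existsP; exists S; rewrite e.
  case: ifP => // DS [<-]; apply: negbTE; rewrite -in_setC -fA.
  by apply: imset_f; apply: inA.
exists s; last by move=> S; rewrite ffunE; case: (h S).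
apply/bij_onP; split.
- move=> P; rewrite ffunE; case e: (h P) => [a|] /=; last by case: (D P).
  by rewrite hD // e.
- move=> l; case: (boolP (l \in img)) => [|lC].
    by rewrite inE => /existsP [S /eqP e]; exists S; rewrite ffunE e.
  have /imsetP [S] : l \in f @: ([set S | D S] :\: dom) by rewrite fA inE.
  rewrite !inE negbK => /andP [/eqP hS DS] ->; exists S; by rewrite ffunE hS DS.
- move=> P P' nz e; have [l eP] : exists l, s P = Some l by case: (s P) nz => // l; exists l.
  have eP' : s P' = Some l by rewrite -e.
  have := s_img P l eP; rewrite (s_img P' l eP').
  move: eP eP'; rewrite !ffunE; case hP: (h P) => [a|]; case hP': (h P') => [b|] //=.
  + by move=> [ea] [eb] _; apply: hinj; rewrite ?hP ?hP' ?ea ?eb.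
  + by case: ifP => // DP [<-]; case: ifP => // DP' [fe] _; apply: finj; rewrite ?inA.
Qed.

Definition relab (r : 'I_(Lf N) -> 'I_(Lf N)) p : Lab N := [ffun P => omap r (p P)].

Lemma relab_inj r : injective r -> injective (relab r).
Proof.
move=> ir p q /ffunP e; apply/ffunP => P; have := e P; rewrite !ffunE.
by case: (p P) (q P) => [a|] [b|] //= [/ir ->].
Qed.

Lemma bij_on_relab D r p : injective r -> bij_on D (relab r p) = bij_on D p.
Proof.
move=> ir; have [g rg gr] := injF_bij ir.
apply/bij_onP/bij_onP => [[h1 h2 h3]|[h1 h2 h3]]; split.
- by move=> P; rewrite -h1 ffunE; case: (p P).
- move=> l; have [P] := h2 (r l); rewrite ffunE.
  by case e: (p P) => [a|] //= [/ir ea]; exists P; rewrite e ea.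
- move=> P P' nz e; apply: h3; first by rewrite ffunE; case: (p P) nz.
  by rewrite !ffunE e.
- by move=> P; rewrite -h1 ffunE; case: (p P).
- by move=> l; have [P e] := h2 (g l); exists P; rewrite ffunE e /= gr.
- move=> P P'; rewrite !ffunE => nz e; apply: h3; first by case: (p P) nz.
  by move: e nz; case: (p P) (p P') => [a|] [b|] //= [/ir ->].
Qed.

Lemma relab_bij_on D p p' :
  bij_on D p -> bij_on D p' -> exists2 r, injective r & relab r p = p'.
Proof.
move=> /bij_onP [h1 h2 h3] /bij_onP [h1' h2' h3'].
pose r l := if [pick P | p P == Some l] is Some P then odflt l (p' P) else l.
have rP l : exists P, p P = Some l /\ p' P = Some (r l).
  rewrite /r; case: pickP => [P /eqP e|]; last by have [P e] := h2 l; move/(_ P); rewrite e eqxx.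
  exists P; split => //; case e': (p' P) => [a|] //.
  by move/eqP: e'; rewrite h1' -h1 e.
exists r.
  move=> l1 l2 e; have [P1 [e1 f1]] := rP l1; have [P2 [e2 f2]] := rP l2.
  have E : P1 = P2 by apply: h3'; rewrite ?f1 ?f2 ?e.
  by move: e1 e2; rewrite E => -> [].
apply/ffunP => P; rewrite ffunE; case e: (p P) => [l|] /=.
  by have [P0 [e0 f0]] := rP l; rewrite -(h3 P0 P) ?e0 ?e.
by move/eqP: e; rewrite h1 -h1' => /eqP.
Qed.

End Bijections.

Lemma card_setI2 (T : finType) (P : {set T}) i i' : i != i' ->
  #|P :&: [set i; i']| = ((i \in P) + (i' \in P))%N.
Proof.
move=> ii'; rewrite -sum1_card (eq_bigl (fun x => (x \in [set i; i']) && (x \in P))).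
  rewrite big_mkcondr big_setU1 ?inE //= big_set1.
  by case: (i \in P); case: (i' \in P).
by move=> x; rewrite !inE andbC.
Qed.

Section Omega.

Variables (N : nat) (t : Pair N).
Implicit Types (P S : {set 'I_N}) (j : 'I_N).

Lemma pairP : exists i i', i != i' /\ val t = [set i; i'].
Proof. exact/cards2P/(valP t). Qed.

Lemma in_Omega i i' P : i != i' -> val t = [set i; i'] ->
  (P \in Omega t) = ((i \in P) != (i' \in P)).
Proof. by move=> ii' ti; rewrite inE ti card_setI2 //; case: (i \in P); case: (i' \in P). Qed.

Lemma card_subsets_notin j : #|[set S : {set 'I_N} | j \notin S]| = (2 ^ (N - 1))%N.
Proof.
have -> : [set S : {set 'I_N} | j \notin S] = powerset [set~ j].
  by apply/setP => S; rewrite powersetE inE subsets_disjoint setCK disjoint_sym disjoints1.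
by rewrite card_powerset cardsC1 card_ord subn1.
Qed.

Lemma card_Omega : #|Omega t| = Lf N.
Proof.
have [i [i' [ii' ti]]] := pairP.
have inj : {in Omega t &, injective (fun P => P :\ i')}.
  move=> P P'; rewrite !(in_Omega _ ii' ti) => hP hP' /setP e; apply/setP => x.
  have := e x; rewrite !in_setD1; case: (eqVneq x i') => [->|//] _.
  have := e i; rewrite !in_setD1 ii' /= => eP; move: hP hP'; rewrite eP.
  by case: (i \in P'); case: (i' \in P); case: (i' \in P').
rewrite /Lf -(card_subsets_notin i') -(card_in_imset inj); apply: eq_card => S.
rewrite inE; apply/imsetP/idP => [[P _ ->]|iS]; first by rewrite setD11.
have [Si|Si] := boolP (i \in S).
  exists S; first by rewrite (in_Omega _ ii' ti) Si (negbTE iS).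
  by apply/esym/setDidPl; rewrite disjoint_sym disjoints1.
exists (i' |: S); last by rewrite setU1K.
by rewrite (in_Omega _ ii' ti) !inE eqxx (negbTE ii') (negbTE Si).
Qed.

Lemma Omega_uniq P x y : P \in Omega t -> x \in P :&: val t -> y \in P :&: val t -> x = y.
Proof. by rewrite inE => /cards1P [z ->]; rewrite !inE => /eqP-> /eqP->. Qed.

Lemma forced_set_notin j P : j \notin forced_set t j P.
Proof. by rewrite /forced_set; case: ifP; rewrite !inE eqxx. Qed.

Lemma forced_set_inj j :
  {in [pred P | (P \in Omega t) && (j \in P)] &, injective (forced_set t j)}.
Proof.
move=> P P' /andP [PO jP] /andP [P'O jP'] /setP e; apply/setP => x.
have [->|xj] := eqVneq x j; first by rewrite jP jP'.
have := e x; rewrite /forced_set; case: ifP => jt; rewrite !inE xj ?andTb // => eP.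
have [xt|xt] := boolP (x \in val t); last by move: eP; rewrite (negbTE xt) !orbF.
have notin Q : Q \in Omega t -> j \in Q -> x \notin Q.
  move=> QO jQ; apply: contra xj => xQ; apply/eqP.
  by apply: (Omega_uniq QO); rewrite inE ?xQ ?jQ ?xt ?jt.
by rewrite (negbTE (notin _ PO jP)) (negbTE (notin _ P'O jP')).
Qed.

Lemma pi_exists : exists p, pi_ok t p.
Proof.
have [|||p pP _] := @bij_on_extend N (fun P => P \in Omega t) (fun _ => None) => //.
  by rewrite -card_Omega; apply: eq_card.
by exists p.
Qed.

Lemma sigma_exists p j : pi_ok t p -> exists s, sigma_ok t p j s.
Proof.
move=> /bij_onP [p1 _ p3].
pose h S := if [pick P | [&& P \in Omega t, j \in P & forced_set t j P == S]] is Some P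
            then p P else None.
have hE P : P \in Omega t -> j \in P -> h (forced_set t j P) = p P.
  move=> PO jP; rewrite /h; case: pickP => [P0 /and3P [P0O jP0 /eqP E]|].
    by rewrite (forced_set_inj _ _ E) //; apply/andP.
  by move/(_ P); rewrite PO jP eqxx.
have hD S : h S != None -> j \notin S.
  by rewrite /h; case: pickP => [P /and3P [_ _ /eqP <-] _|//]; apply: forced_set_notin.
have hinj S S' : h S != None -> h S = h S' -> S = S'.
  rewrite /h; case: pickP => [P /and3P [_ _ /eqP <-]|//].
  case: pickP => [P' /and3P [_ _ /eqP <-] nz /(p3 _ _ nz) -> //|_ nz e].
  by rewrite e in nz.
have [|s sP sh] := @bij_on_extend N (fun S => j \notin S) h _ hD hinj.
  by rewrite /Lf -(card_subsets_notin j); apply: eq_card => S; rewrite inE.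
exists s; rewrite /sigma_ok sP; apply/forallP => P; apply/implyP => /andP [PO jP].
by rewrite sh hE // p1 PO.
Qed.

End Omega.

Lemma big_addb_sym n (P : {set 'I_n}) (F : 'I_n -> 'I_n -> bool) :
  (forall x y, F x y = F y x) ->
  \big[addb/false]_(j in P) \big[addb/false]_(v in P :\ j) F j v = false.
Proof.
move=> Fsym.
have split_lt j : \big[addb/false]_(v in P :\ j) F j v =
    \big[addb/false]_(v in P | j < v) F j v (+) \big[addb/false]_(v in P | v < j) F j v.
  rewrite (bigID (fun v : 'I_n => j < v)) /=; congr addb; apply: eq_bigl => v; rewrite !inE.
    by case: (eqVneq v j) => [->|] //=; rewrite ltnn andbF.
  case: (eqVneq v j) => [->|vj] /=; first by rewrite ltnn andbF.
  by rewrite -leqNgt ltn_neqAle -[(v : nat) != j]/(v != j) vj.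
rewrite (eq_bigr _ (fun j _ => split_lt j)) big_split /=.
rewrite (exchange_big_dep (fun j => j \in P)) /=; last by move=> i j _ /andP [].
rewrite [X in X (+) _](eq_bigr (fun j : 'I_n => \big[addb/false]_(v in P | v < j) F j v)) ?addbb //.
by move=> j jP; apply: eq_big => [v|v _]; rewrite 1?Fsym // jP.
Qed.

Section Reliability.

Variable N : nat.
Implicit Types (t : Pair N) (W : Files N) (P S : {set 'I_N}) (j : 'I_N).

Lemma Wbit_sym W j v l : Wbit W j v l = Wbit W v j l.
Proof. by rewrite /Wbit setUC. Qed.

Lemma Wbit_pair W t a b l : val t = [set a; b] -> Wbit W a b l = W t l.
Proof. by move=> tab; rewrite /Wbit -tab valK. Qed.

Lemma Omega_split t P : P \in Omega t ->
  exists a b, [/\ val t = [set a; b], a \in P & b \notin P].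
Proof.
have [i [i' [ii' ti]]] := pairP t; rewrite (in_Omega _ ii' ti).
have [iP|iP] := boolP (i \in P) => hP; first by exists i, i'; rewrite ti iP; case: (i' \in P) hP.
by exists i', i; rewrite ti setUC iP; case: (i' \in P) hP.
Qed.

Lemma big_addb_forced t W P l : P \in Omega t ->
  \big[addb/false]_(j in P) \big[addb/false]_(v in forced_set t j P) Wbit W j v l = W t l.
Proof.
move=> PO; have [a [b [tab aP bP]]] := Omega_split PO.
have ab : a != b by apply: contraNneq bP => <-.
have forced_a : forced_set t a P = b |: (P :\ a).
  rewrite /forced_set tab !inE eqxx /= setUC; congr (_ :|: _); apply/setP => x.
  by rewrite !inE; case: (eqVneq x a) => [->|] //=; rewrite (negbTE ab).
have forced_j j : j \in P -> j != a -> forced_set t j P = P :\ j.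
  move=> jP ja; rewrite /forced_set ifF //; apply: contraNF ja => jt; apply/eqP.
  by apply: (Omega_uniq PO); rewrite inE ?jP ?aP // tab !inE eqxx.
rewrite (bigD1 a) //= forced_a big_setU1 /=; last by rewrite !inE negb_and bP orbT.
rewrite (Wbit_pair _ _ tab) -addbA -[RHS]addbF; congr addb.
have := big_addb_sym P (fun x y => Wbit_sym W x y l); rewrite (bigD1 a) //= => E.
apply: etrans E; congr addb.
by apply: eq_big => // j /andP [jP ja]; rewrite forced_j.
Qed.

Definition server_answer W (s : Lab N) j : {ffun {set 'I_N} -> bool} :=
  [ffun P => if s P is Some l then \big[addb/false]_(v in P) Wbit W j v l else false].

Lemma answerE w j : answer w j = server_answer (files w) (query w j) j.
Proof.
apply/ffunP => P; rewrite !ffunE; case: (sigmaOf w j P) => // l.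
by case: eqVneq => [->|]; rewrite ?big_set0.
Qed.

Definition decode t (q : {ffun 'I_N -> Lab N})
    (ans : {ffun 'I_N -> {ffun {set 'I_N} -> bool}}) : Bits N :=
  [ffun l => if [pick P | (P \in Omega t) && [exists j in P, q j (forced_set t j P) == Some l]]
             is Some P then \big[addb/false]_(j in P) ans j (forced_set t j P) else false].

Lemma sigma_ok_forced t p j s P :
  sigma_ok t p j s -> P \in Omega t -> j \in P -> s (forced_set t j P) = p P.
Proof. by case/andP => _ /forallP/(_ P)/implyP hP PO jP; apply/eqP/hP/andP. Qed.

Lemma decode_answers t W p (s : 'I_N -> Lab N) :
  pi_ok t p -> (forall j, sigma_ok t p j (s j)) ->
  decode t [ffun j => s j] [ffun j => server_answer W (s j) j] = W t.
Proof.
move=> /bij_onP [p1 p2 p3] hs; apply/ffunP => l; rewrite ffunE.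
have [P0 eP0] := p2 l; have P0O : P0 \in Omega t by rewrite -[_ \in _]negbK -p1 eP0.
case: pickP => [P /andP [PO /existsP [j /andP [jP /eqP e]]]|none]; last first.
  have [a [_ [_ aP _]]] := Omega_split P0O.
  have /negP[] := negbT (none P0); rewrite P0O; apply/existsP; exists a.
  by rewrite aP ffunE (sigma_ok_forced (hs a)) ?eP0 ?eqxx.
have pP : p P = Some l by rewrite -(sigma_ok_forced (hs j) PO jP) -e ffunE.
have -> : P = P0 by apply: p3; rewrite pP ?eP0.
rewrite -(big_addb_forced W l P0O); apply: eq_bigr => k kP.
by rewrite !ffunE (sigma_ok_forced (hs k)) ?eP0.
Qed.

End Reliability.

Lemma mu_gt0_ok (R : realType) N t W p s : (0 < mu R (t, W, p, s))%R ->
  @pi_ok N t p /\ forall j, sigma_ok t p j (s j).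
Proof.
rewrite /mu; have [hp|] := boolP (pi_ok t p); last by rewrite !(mul0r, mulr0) ltxx.
have [/forallP //|/forallPn [k nk]] := boolP [forall k, sigma_ok t p k (s k)].
by rewrite (bigD1 k) //= (negbTE nk) !(mul0r, mulr0) ltxx.
Qed.

Lemma reliable_scheme (R : realType) N : reliable R N.
Proof.
exists (@decode N) => -[[[t W] p] s] /mu_gt0_ok [hp hs].
by rewrite (eq_ffun _ (answerE _)); apply: (decode_answers W hp hs).
Qed.

Local Open Scope ring_scope.

Section UniformLaw.

Variable R : numFieldType.
Implicit Types (T : finType).

Lemma sum_natr_card T (A : pred T) : \sum_x ((A x)%:R : R) = #|[pred x | A x]|%:R.
Proof.
rewrite -sum1_card natr_sum [RHS]big_mkcond; apply: eq_bigr => x _.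
by rewrite inE; case: (A x).
Qed.

Lemma sum_inv_card T : (0 < #|T|)%N -> \sum_(x : T) (#|T|%:R : R)^-1 = 1.
Proof. by move=> T0; rewrite sumr_const -[_ *+ #|_|]mulr_natr mulVf // pnatr_eq0 -lt0n. Qed.

Definition unif T (A : pred T) (x : T) : R := (A x)%:R / #|[pred y | A y]|%:R.

Lemma unif_ge0 T (A : pred T) x : 0 <= unif A x.
Proof. by rewrite divr_ge0 ?ler0n. Qed.

Lemma unif_eq0 T (A : pred T) x : ~~ A x -> unif A x = 0.
Proof. by move/negbTE; rewrite /unif => ->; rewrite mul0r. Qed.

Lemma sum_unif T (A : pred T) : (exists x, A x) -> \sum_x unif A x = 1.
Proof.
move=> [x Ax]; rewrite -mulr_suml sum_natr_card mulfV // pnatr_eq0 -lt0n.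
by apply/card_gt0P; exists x.
Qed.

Lemma unif_bij T (f : T -> T) (A B : pred T) x :
  bijective f -> (forall y, B (f y) = A y) -> unif B (f x) = unif A x.
Proof.
move=> [g fK gK] BA; rewrite /unif BA; congr (_ / _%:R).
rewrite -(card_image (can_inj fK) [pred y | A y]); apply: eq_card => y; rewrite inE.
apply/idP/imageP => [By|[z Az ->]]; last by rewrite BA.
by exists (g y); rewrite ?inE -?BA gK.
Qed.

End UniformLaw.

Lemma sum_ffun_prod_marginal (R : comPzSemiRingType) (I T : finType)
    (f : I -> T -> R) (G : T -> R) (j : I) :
  (forall k, k != j -> \sum_v f k v = 1) ->
  \sum_(s : {ffun I -> T}) (\prod_k f k (s k)) * G (s j) = \sum_v f j v * G v.
Proof.
move=> f1; pose g k v := if k == j then f k v * G v else f k v.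
transitivity (\sum_(s : {ffun I -> T}) \prod_k g k (s k)).
  apply: eq_bigr => s _; rewrite (bigD1 j) //= [RHS](bigD1 j) //= {1}/g eqxx mulrAC.
  by congr (_ * _); apply: eq_bigr => k kj; rewrite /g (negbTE kj).
rewrite -bigA_distr_bigA (bigD1 j) //= [X in _ * X]big1 ?mulr1 => [|k kj].
  by apply: eq_bigr => v _; rewrite /g eqxx.
by rewrite -(f1 k kj); apply: eq_bigr => v _; rewrite /g (negbTE kj).
Qed.

Lemma sum_pair (R : nmodType) (I J : finType) (F : I * J -> R) :
  \sum_(x : I * J) F x = \sum_i \sum_j F (i, j).
Proof. by rewrite pair_bigA; apply: eq_bigr => -[]. Qed.

Definition nbhd_bij N (j : 'I_N) (s : Lab N) : bool := bij_on (fun S => j \notin S) s.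

Lemma card_Pair_gt0 N : (1 < N)%N -> (0 < #|{: Pair N}|)%N.
Proof.
move=> N1; pose i0 := Ordinal (ltnW N1); pose i1 := Ordinal N1.
have i01 : #|[set i0; i1]| == 2%N by rewrite cards2.
by apply/card_gt0P; exists (exist (fun e : {set 'I_N} => #|e| == 2%N) _ i01).
Qed.

Section Law.

Variables (R : realType) (N : nat).
Implicit Types (t : Pair N) (W : Files N) (p s u : Lab N) (j : 'I_N).

Lemma pi_ok_relab t r p : injective r -> pi_ok t (relab r p) = pi_ok t p.
Proof. exact: bij_on_relab. Qed.

Lemma sigma_ok_relab t r p j s :
  injective r -> sigma_ok t (relab r p) j (relab r s) = sigma_ok t p j s.
Proof.
move=> ir; rewrite /sigma_ok bij_on_relab //; congr andb; apply: eq_forallb => P.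
by rewrite !ffunE; case: (s _) (p P) => [a|] [b|] //=; rewrite !eqE /= (inj_eq ir).
Qed.

Definition sigma_marginal t j u : R := \sum_p unif R (pi_ok t) p * unif R (sigma_ok t p j) u.

Lemma sigma_marginal_relab t j r u :
  injective r -> sigma_marginal t j (relab r u) = sigma_marginal t j u.
Proof.
move=> ir; have relab_bij := injF_bij (relab_inj ir).
rewrite /sigma_marginal (reindex_inj (relab_inj ir)); apply: eq_bigr => p _.
rewrite (unif_bij _ _ relab_bij (fun q => pi_ok_relab t q ir)).
by rewrite (unif_bij _ _ relab_bij (fun v => sigma_ok_relab t p j v ir)).
Qed.

Lemma sum_sigma_marginal t j : \sum_u sigma_marginal t j u = 1.
Proof.
have [p0 hp0] := pi_exists t; rewrite exchange_big -(sum_unif R (ex_intro _ p0 hp0)) /=.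
apply: eq_bigr => p _; rewrite -mulr_sumr.
have [hp|hp] := boolP (pi_ok t p); last by rewrite unif_eq0 ?mul0r.
by rewrite sum_unif ?mulr1 //; apply: sigma_exists.
Qed.

Lemma sigma_marginalE t j u : sigma_marginal t j u = unif R (nbhd_bij j) u.
Proof.
have [p0 hp0] := pi_exists t; have [u0 hu0] := sigma_exists j hp0.
have b0 : nbhd_bij j u0 by case/andP: hu0.
have E v : sigma_marginal t j v = (nbhd_bij j v)%:R * sigma_marginal t j u0.
  have [bv|bv] := boolP (nbhd_bij j v); last first.
    rewrite mul0r /sigma_marginal big1 // => p _; rewrite [X in _ * X]unif_eq0 ?mulr0 //.
    by apply: contraNN bv => /andP [].
  by have [r ir <-] := relab_bij_on b0 bv; rewrite mul1r sigma_marginal_relab.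
have := sum_sigma_marginal t j; under eq_bigr do rewrite E.
rewrite -mulr_suml sum_natr_card => H; rewrite E /unif; congr (_ * _).
have cnz : (#|[pred v | nbhd_bij j v]|%:R : R) != 0.
  by rewrite pnatr_eq0 -lt0n; apply/card_gt0P; exists u0.
by apply: (mulfI cnz); rewrite H mulfV.
Qed.

Lemma muE t W p (s : {ffun 'I_N -> Lab N}) : mu R (t, W, p, s) =
  (#|{: Pair N}|%:R)^-1 * (#|{: Files N}|%:R)^-1 * unif R (pi_ok t) p *
  \prod_j unif R (sigma_ok t p j) (s j).
Proof. by []. Qed.

Lemma sum_outcome (F : Outcome N -> R) :
  \sum_w F w = \sum_t \sum_W \sum_p \sum_(s : {ffun 'I_N -> Lab N}) F (t, W, p, s).
Proof. by rewrite !sum_pair. Qed.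

Lemma sum_mu_query j (F : Pair N -> Files N -> Lab N -> R) :
  \sum_w mu R w * F (theta w) (files w) (query w j) =
  (#|{: Pair N}|%:R)^-1 * (#|{: Files N}|%:R)^-1 *
  \sum_t \sum_W \sum_u unif R (nbhd_bij j) u * F t W u.
Proof.
rewrite sum_outcome !mulr_sumr; apply: eq_bigr => t _; rewrite mulr_sumr; apply: eq_bigr => W _.
have query_marginal p :
    unif R (pi_ok t) p * \sum_(s : {ffun 'I_N -> Lab N})
      (\prod_k unif R (sigma_ok t p k) (s k)) * F t W (s j) =
    unif R (pi_ok t) p * \sum_u unif R (sigma_ok t p j) u * F t W u.
  have [hp|hp] := boolP (pi_ok t p); last by rewrite unif_eq0 // !mul0r.
  rewrite (sum_ffun_prod_marginal (f := fun k => unif R (sigma_ok t p k))) // => k _.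
  exact/sum_unif/sigma_exists.
transitivity ((#|{: Pair N}|%:R)^-1 * (#|{: Files N}|%:R)^-1 *
    \sum_p unif R (pi_ok t) p * \sum_u unif R (sigma_ok t p j) u * F t W u).
  rewrite mulr_sumr; apply: eq_bigr => p _; rewrite -query_marginal !mulr_sumr.
  by apply: eq_bigr => s _; rewrite muE !mulrA.
congr (_ * _); under eq_bigr do rewrite mulr_sumr; rewrite exchange_big /=.
apply: eq_bigr => u _; rewrite -(sigma_marginalE t) mulr_suml.
by apply: eq_bigr => p _; rewrite mulrA.
Qed.

Lemma sum_mu : (1 < N)%N -> \sum_(w : Outcome N) mu R w = 1.
Proof.
move=> N1; pose j := Ordinal (ltnW N1).
have [t _] : exists t : Pair N, true by apply/card_gt0P/card_Pair_gt0.
have [p hp] := pi_exists t; have [u /andP [hu _]] := sigma_exists j hp.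
have sum1 : \sum_u unif R (nbhd_bij j) u * 1 = 1.
  by under eq_bigr do rewrite mulr1; apply: sum_unif; exists u.
have := sum_mu_query j (fun _ _ _ => 1); under eq_bigr do rewrite mulr1; move=> ->.
under eq_bigr do under eq_bigr do rewrite sum1.
have cP : (#|{: Pair N}|%:R : R) != 0 by rewrite pnatr_eq0 -lt0n card_Pair_gt0.
have cF : (#|{: Files N}|%:R : R) != 0.
  by rewrite pnatr_eq0 -lt0n; apply/card_gt0P; exists [ffun=> [ffun=> false]].
by rewrite !sumr_const -mulrnA mulnC natrM mulrC -invfM mulfV ?mulf_neq0.
Qed.

End Law.

Section Entropy.

Variables (R : realType) (N : nat).
Implicit Types (T U : finType).

Lemma mu_ge0 (w : Outcome N) : 0 <= mu R w.
Proof.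
case: w => [[[t W] p] s]; rewrite muE !mulr_ge0 ?invr_ge0 ?ler0n ?unif_ge0 //.
by apply: prodr_ge0 => j _; apply: unif_ge0.
Qed.

Lemma pr_ge0 T (X : Outcome N -> T) x : 0 <= pr R X x.
Proof. by apply: sumr_ge0 => w _; apply: mu_ge0. Qed.

Lemma prE T (X : Outcome N -> T) x : pr R X x = \sum_w mu R w * (X w == x)%:R.
Proof. by rewrite /pr big_mkcond; apply: eq_bigr => w _; case: eqP; rewrite ?mulr1 ?mulr0. Qed.

Lemma sum_pred1R T (a : T) : \sum_x ((a == x)%:R : R) = 1.
Proof.
rewrite sum_natr_card -[RHS]/(1%N%:R) -(card1 a); congr _%:R.
by apply: eq_card => x; rewrite !inE eq_sym.
Qed.

Lemma sum_pr T (X : Outcome N -> T) : \sum_x pr R X x = \sum_(w : Outcome N) mu R w.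
Proof.
under eq_bigr do rewrite prE; rewrite exchange_big; apply: eq_bigr => w _.
by rewrite -mulr_sumr sum_pred1R mulr1.
Qed.

Lemma sum_pr_pair_r T U (X : Outcome N -> T) (Y : Outcome N -> U) x :
  \sum_y pr R (fun w => (X w, Y w)) (x, y) = pr R X x.
Proof.
under eq_bigr do rewrite prE; rewrite exchange_big prE; apply: eq_bigr => w _.
rewrite (eq_bigr (fun y => mu R w * (X w == x)%:R * (Y w == y)%:R)) => [|y _].
  by rewrite -mulr_sumr sum_pred1R mulr1.
by rewrite xpair_eqE -mulnb natrM mulrA.
Qed.

Lemma sum_pr_pair_l T U (X : Outcome N -> T) (Y : Outcome N -> U) y :
  \sum_x pr R (fun w => (X w, Y w)) (x, y) = pr R Y y.
Proof.
under eq_bigr do rewrite prE; rewrite exchange_big prE; apply: eq_bigr => w _.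
rewrite (eq_bigr (fun x => mu R w * (Y w == y)%:R * (X w == x)%:R)) => [|x _].
  by rewrite -mulr_sumr sum_pred1R mulr1.
by rewrite xpair_eqE -mulnb natrM mulrA mulrAC.
Qed.

Lemma pr_pair_factor T U (X : Outcome N -> T) (Y : Outcome N -> U) (al : T -> R) (be : U -> R) :
  \sum_(w : Outcome N) mu R w = 1 -> \sum_x al x = 1 ->
  (forall x y, pr R (fun w => (X w, Y w)) (x, y) = al x * be y) ->
  forall x y, pr R (fun w => (X w, Y w)) (x, y) = pr R X x * pr R Y y.
Proof.
move=> mu1 al1 E.
have prY y : pr R Y y = be y.
  by rewrite -(sum_pr_pair_l X); under eq_bigr do rewrite E; rewrite -mulr_suml al1 mul1r.
have be1 : \sum_y be y = 1 by under eq_bigr do rewrite -prY; rewrite sum_pr.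
have prX x : pr R X x = al x.
  by rewrite -(sum_pr_pair_r _ Y); under eq_bigr do rewrite E; rewrite -mulr_sumr be1 mulr1.
by move=> x y; rewrite E prX prY.
Qed.

Lemma mulr_log2M (a b : R) : 0 <= a -> 0 <= b ->
  a * b * log2 (a * b) = a * b * log2 a + a * b * log2 b.
Proof.
move=> a0 b0; have [->|an] := eqVneq a 0; first by rewrite !mul0r add0r.
have [->|bn] := eqVneq b 0; first by rewrite !(mulr0, mul0r) addr0.
by rewrite /log2 lnM ?posrE ?lt0r ?an ?bn // mulrDl mulrDr.
Qed.

Lemma centropy_indep T U (X : Outcome N -> T) (Y : Outcome N -> U) :
  \sum_(w : Outcome N) mu R w = 1 ->
  (forall x y, pr R (fun w => (X w, Y w)) (x, y) = pr R X x * pr R Y y) ->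
  centropy R X Y = entropy R X.
Proof.
move=> mu1 E; pose h T (Z : Outcome N -> T) := \sum_z pr R Z z * log2 (pr R Z z).
have joint x : \sum_y pr R (fun w => (X w, Y w)) (x, y) * log2 (pr R (fun w => (X w, Y w)) (x, y))
    = pr R X x * log2 (pr R X x) + pr R X x * h U Y.
  rewrite (eq_bigr (fun y => pr R X x * log2 (pr R X x) * pr R Y y +
                             pr R X x * (pr R Y y * log2 (pr R Y y)))) => [|y _].
    by rewrite big_split /= -!mulr_sumr (sum_pr Y) mu1 mulr1.
  by rewrite E mulr_log2M ?pr_ge0 // mulrAC mulrA.
rewrite /centropy /entropy sum_pair (eq_bigr _ (fun x _ => joint x)) big_split /=.
by rewrite -mulr_suml (sum_pr X) mu1 mul1r opprD opprK addrNK.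
Qed.

Lemma log2_exp2 k : log2 ((2 : R) ^+ k) = k%:R.
Proof.
rewrite /log2 lnXn // -[ln 2 *+ k]mulr_natr mulrAC mulfV ?mul1r //.
by rewrite gt_eqF // ln_gt0 // ltr1n.
Qed.

Lemma entropy_unif T (X : Outcome N -> T) (A : pred T) :
  (exists x, A x) -> (forall x, pr R X x = unif R A x) ->
  entropy R X = log2 #|[pred x | A x]|%:R.
Proof.
move=> [x0 Ax0] E; set c : R := #|[pred x | A x]|%:R.
have c_gt0 : 0 < c by rewrite ltr0n; apply/card_gt0P; exists x0.
rewrite /entropy (eq_bigr (fun x => (A x)%:R * (c^-1 * log2 c^-1))) => [|x _]; last first.
  by rewrite E /unif -/c; case: (A x); rewrite ?mul1r ?mul0r.
rewrite -mulr_suml sum_natr_card -/c mulrA mulfV ?gt_eqF // mul1r.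
by rewrite /log2 lnV ?posrE // mulNr opprK.
Qed.

End Entropy.

Lemma private_scheme (R : realType) N : (1 < N)%N -> private R N.
Proof.
move=> N1 j; apply: centropy_indep (sum_mu R N1) _.
pose stored_of (W : Files N) := [ffun e : Pair N => if j \in val e then Some (W e) else None].
pose server_view (W : Files N) y :=
  \sum_(u : Lab N) unif R (nbhd_bij j) u * ((u, stored_of W) == y)%:R.
apply: (pr_pair_factor (al := fun=> (#|{: Pair N}|%:R)^-1)
          (be := fun y => (#|{: Files N}|%:R)^-1 * \sum_W server_view W y)).
- exact: sum_mu.
- exact/sum_inv_card/card_Pair_gt0.
move=> t0 y; rewrite prE (sum_mu_query j (fun t W u => ((t, (u, stored_of W)) == (t0, y))%:R)).
rewrite -mulrA; congr (_ * (_ * _)).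
rewrite (eq_bigr (fun t => (t0 == t)%:R * \sum_W server_view W y)) => [|t _].
  by rewrite -mulr_suml sum_pred1R mul1r.
rewrite mulr_sumr; apply: eq_bigr => W _; rewrite mulr_sumr; apply: eq_bigr => u _.
by rewrite xpair_eqE -mulnb natrM eq_sym mulrCA.
Qed.

Section Answers.

Variables (N : nat) (j : 'I_N).
Implicit Types (W D : Files N) (u : Lab N) (a : {ffun {set 'I_N} -> bool}).

Definition answer_support : {set {set 'I_N}} := [set S : {set 'I_N} | (S != set0) && (j \notin S)].

Definition answer_space : {set {ffun {set 'I_N} -> bool}} :=
  [set a : {ffun {set 'I_N} -> bool} | [forall S, a S ==> (S \in answer_support)]].

Lemma card_answer_space : #|answer_space| = (2 ^ (2 ^ (N - 1) - 1))%N.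
Proof.
have card_support : #|answer_support| = (2 ^ (N - 1) - 1)%N.
  rewrite -(card_subsets_notin j) (cardsD1 set0) inE in_set0 /= add1n subSS subn0.
  by apply: eq_card => S; rewrite !inE.
rewrite -card_support -[in RHS]card_bool -(card_pffun_on false); apply: eq_card => a.
rewrite inE; apply/forallP/pffun_onP => [a_supp|[/subsetP a_supp _] S].
  split=> [|b _]; last by rewrite inE.
  by apply/subsetP => S; rewrite inE => aS; apply: (implyP (a_supp S)); case: (a S) aS.
by apply/implyP => aS; apply: a_supp; rewrite inE aS.
Qed.

Lemma server_answer_in W u : nbhd_bij j u -> server_answer W u j \in answer_space.
Proof.
move=> /bij_onP [u1 _ _]; rewrite inE; apply/forallP => S; apply/implyP.
rewrite ffunE inE; case e: (u S) => [l|] // ans; apply/andP; split.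
  by apply: contraTneq ans => ->; rewrite big_set0.
by have := u1 S; rewrite e => /esym/negbFE.
Qed.

Definition xor_files W D : Files N := [ffun e => [ffun l => W e l (+) D e l]].

Lemma xor_filesK D : involutive (xor_files ^~ D).
Proof. by move=> W; apply/ffunP => e; apply/ffunP => l; rewrite !ffunE addbK. Qed.

Lemma server_answer_xor W D u P :
  server_answer (xor_files W D) u j P = server_answer W u j P (+) server_answer D u j P.
Proof.
rewrite !ffunE; case: (u P) => // l; rewrite -big_split /=; apply: eq_bigr => v _.
by rewrite /Wbit; case: insub => // e; rewrite !ffunE.
Qed.

Lemma Wbit_set2 v W l : j != v -> exists2 e : Pair N, val e = [set j; v] & Wbit W j v l = W e l.
Proof.
move=> jv; have e2 : #|[set j; v]| == 2%N by rewrite cards2 jv.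
by exists (exist (fun e : {set 'I_N} => #|e| == 2%N) _ e2) => //; rewrite /Wbit insubT.
Qed.

Lemma server_answer_onto u a : nbhd_bij j u -> a \in answer_space ->
  exists D, server_answer D u j = a.
Proof.
move=> hu /[!inE] /forallP aV; have [_ _ u3] := bij_onP _ _ hu.
have a_out S : S \notin answer_support -> a S = false.
  by move=> S_out; apply: contraNF S_out => /(implyP (aV S)).
(* Bit [a P] is stored at position [u P] of the single file {j, partner P}. *)
pose partner (P : {set 'I_N}) := odflt j [pick v in P].
pose D := [ffun e : Pair N => [ffun l => if [pick P | u P == Some l] is Some P
                                 then a P && (val e == [set j; partner P]) else false]].
exists D.
apply/ffunP => P; rewrite ffunE; case eP: (u P) => [l|]; last first.
  by rewrite a_out // inE negb_and -(bij_on_dom _ hu) eP orbT.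
have jP : j \notin P by rewrite -(bij_on_dom _ hu) eP.
have [->|/set0Pn [v0 v0P]] := eqVneq P set0; first by rewrite big_set0 a_out // inE eqxx.
have pP : partner P \in P by rewrite /partner; case: pickP => [//|/(_ v0)]; rewrite v0P.
have Wbit_partner v : v \in P -> Wbit D j v l = a P && (v == partner P).
  move=> vP; have jv : j != v by apply: contraNneq jP => ->.
  have [e ej ->] := Wbit_set2 D l jv; rewrite !ffunE.
  case: pickP => [P' /eqP eP'|/(_ P)]; last by rewrite eP eqxx.
  rewrite (u3 P' P) ?eP' ?eP // ej; congr andb; apply/eqP/eqP => [E|->] //.
  move/setP/(_ v): E; rewrite !inE eqxx orbT => /esym/orP [/eqP vj|/eqP //].
  by rewrite vj eqxx in jv.
rewrite (bigD1 (partner P)) //= Wbit_partner // eqxx andbT big1 ?addbF // => v /andP [vP vp].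
by rewrite Wbit_partner // (negbTE vp) andbF.
Qed.

Definition answer_fiber u a : {set Files N} := [set W | server_answer W u j == a].

Lemma card_answer_fiber u a : nbhd_bij j u -> a \in answer_space ->
  #|answer_fiber u a| = #|answer_fiber u [ffun=> false]|.
Proof.
move=> hu aV; have [D hD] := server_answer_onto hu aV.
rewrite -[RHS](card_preimset _ (can_inj (xor_filesK D))); apply: eq_card => W.
rewrite !inE; apply/eqP/eqP => E; apply/ffunP => P.
  by rewrite server_answer_xor E hD ffunE addbb.
move/ffunP/(_ P): E; rewrite server_answer_xor -hD.
by move: (server_answer W u j P) (server_answer D u j P) => [] []; rewrite ffunE.
Qed.

Lemma card_answer_fiberE u a : nbhd_bij j u ->
  (#|answer_fiber u a| * #|answer_space|)%N = ((a \in answer_space) * #|{: Files N}|)%N.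
Proof.
move=> hu; have [aV|aV] := boolP (a \in answer_space); last first.
  rewrite mul0n; apply/eqP; rewrite muln_eq0 cards_eq0; apply/orP; left.
  apply/eqP/setP => W; rewrite !inE; apply: contraNF aV => /eqP <-.
  exact: server_answer_in.
rewrite mul1n (card_answer_fiber hu aV) -[RHS]sum1_card.
rewrite (partition_big (fun W => server_answer W u j) (mem answer_space)) => [|W _]; last first.
  exact: server_answer_in.
rewrite (eq_bigr (fun _ => #|answer_fiber u [ffun=> false]|)) => [|b bV].
  by rewrite sum_nat_const mulnC.
by rewrite -(card_answer_fiber hu bV) sum1dep_card; apply: eq_card => W; rewrite !inE.
Qed.

Lemma pr_answer (R : realType) a : (1 < N)%N ->
  pr R (fun w => answer w j) a = unif R (fun b => b \in answer_space) a.
Proof.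
move=> N1; have [t _] : exists t : Pair N, true by apply/card_gt0P/card_Pair_gt0.
have [p hp] := pi_exists t; have [u0 /andP [hu0 _]] := sigma_exists j hp.
set cP : R := #|{: Pair N}|%:R; set cF : R := #|{: Files N}|%:R; set cV : R := #|answer_space|%:R.
have cP0 : cP != 0 by rewrite pnatr_eq0 -lt0n card_Pair_gt0.
have cF0 : cF != 0 by rewrite pnatr_eq0 -lt0n; apply/card_gt0P; exists [ffun=> [ffun=> false]].
have cV0 : cV != 0 by rewrite pnatr_eq0 card_answer_space expn_eq0.
have fiber u : nbhd_bij j u ->
    \sum_W (server_answer W u j == a)%:R = (a \in answer_space)%:R * cF / cV.
  move=> hu; apply: (mulIf cV0); rewrite divfK // sum_natr_card -!natrM.
  by rewrite -(card_answer_fiberE a hu); congr (_ * _)%:R; apply: eq_card => W; rewrite !inE.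
have inner : \sum_W \sum_u unif R (nbhd_bij j) u * (server_answer W u j == a)%:R =
    (a \in answer_space)%:R * cF / cV.
  rewrite exchange_big
    (eq_bigr (fun u => unif R (nbhd_bij j) u * ((a \in answer_space)%:R * cF / cV))).
    by rewrite -mulr_suml sum_unif ?mul1r //; exists u0.
  move=> u _; rewrite -mulr_sumr; have [hu|hu] := boolP (nbhd_bij j u); first by rewrite fiber.
  by rewrite unif_eq0 ?mul0r.
rewrite prE (eq_bigr _ (fun w _ => congr1 (fun x => mu R w * (x == a)%:R) (answerE w j))).
rewrite (sum_mu_query j (fun _ W u => (server_answer W u j == a)%:R)).
rewrite (eq_bigr _ (fun _ _ => inner)).
rewrite sumr_const -[_ *+ #|_|]mulr_natr /unif -/cP -/cF.
have -> : #|[pred b | b \in answer_space]|%:R = cV by congr _%:R; apply: eq_card.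
by field; rewrite cP0 cF0 cV0.
Qed.

Lemma entropy_answer (R : realType) : (1 < N)%N ->
  entropy R (fun w => answer w j) = (2 ^ (N - 1) - 1)%:R.
Proof.
move=> N1; rewrite (entropy_unif (A := fun a => a \in answer_space)) => [||a].
- have -> : #|[pred a | a \in answer_space]| = #|answer_space| by apply: eq_card.
  by rewrite card_answer_space natrX log2_exp2.
- by exists [ffun=> false]; rewrite inE; apply/forallP => S; rewrite ffunE.
- exact: pr_answer.
Qed.

End Answers.

Lemma rate_scheme (R : realType) N : (1 < N)%N ->
  rate R N = (2 ^ (N - 1))%:R / ((2 ^ (N - 1) - 1)%:R * N%:R).
Proof.
move=> N1; rewrite /rate (eq_bigr _ (fun j _ => entropy_answer j R N1)).
by rewrite sumr_const card_ord mulr_natr.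
Qed.

Theorem theorem8 (R : realType) (N : nat) : (3 <= N)%N ->
  reliable R N /\ private R N /\
  rate R N = (2 ^ (N - 1))%:R / ((2 ^ (N - 1) - 1)%:R * N%:R).
Proof.
move=> N3; have N1 : (1 < N)%N by apply: leq_trans N3.
by split; [exact: reliable_scheme | split; [exact: private_scheme | exact: rate_scheme]].
Qed.
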